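(* Let $-1$ denote the automorphism of $\mathcal A_\theta^{alg}$ with $U_1\mapsto U_1^{-1}$, $U_2\mapsto U_2^{-1}$, and let $H^0(\mathcal A_\theta^{alg},{}_{-1}\mathcal A_\theta^{alg\ast})$ be the space of formal series $\varphi=\sum\varphi_{n,m}U_1^nU_2^m$ with $((-1)\cdot a)\varphi=\varphi a$ for all $a\in\mathcal A_\theta^{alg}$. Let $\mathbb Z_4$ be generated by the automorphism $\rho$ with $\rho\cdot U_1=U_2^{-1}$, $\rho\cdot U_2=U_1$ (so $\rho^2=-1$), acting on this space termwise. Then $H^0(\mathcal A_\theta^{alg},{}_{-1}\mathcal A_\theta^{alg\ast})^{\mathbb Z_4}\cong\mathbb C^3$.
   Context: Let $\theta\in\mathbb R\setminus\mathbb Q$, $\lambda=e^{2\pi i\theta}$. $\mathcal A_\theta^{alg}$ is the complex algebra of finite sums $\sum a_{n,m}U_1^nU_2^m$ with $U_1,U_2$ invertible and $U_2U_1=\lambda U_1U_2$; formal series $\sum_{(n,m)\in\mathbb Z^2}\varphi_{n,m}U_1^nU_2^m$ with arbitrary coefficients form an $\mathcal A_\theta^{alg}$-bimodule via multiplication. Termwise action of an automorphism $h$: $h\cdot\sum\varphi_{n,m}U_1^nU_2^m=\sum\varphi_{n,m}\,h\cdot(U_1^nU_2^m)$. *)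

From HB Require Import structures.
From mathcomp Require Import all_boot all_order all_algebra.
From mathcomp Require Import complex.
From mathcomp Require Import reals trigo.

Set Implicit Arguments.
Unset Strict Implicit.
Unset Printing Implicit Defensive.

Import Order.TTheory GRing.Theory Num.Theory.
Local Open Scope ring_scope.
Local Open Scope complex_scope.

Section NCTorus.
Variable R : realType.
Variable theta : R.

Definition lambda : R[i] := (cos (2 * pi * theta))%:C + 'i * (sin (2 * pi * theta))%:C.

(* A monomial U_1^n U_2^m is indexed by (n, m) : int * int. *)
(* Product of monomials, using U_2 U_1 = lambda U_1 U_2 (hence
   U_2^b U_1^n = lambda^(b n) U_1^n U_2^b):
   (U_1^a U_2^b)(U_1^n U_2^m) = lambda^(b n) U_1^(a+n) U_2^(b+m). *)
Definition mono_mul (x y : int * int) : R[i] * (int * int) :=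
  (lambda ^ (x.2 * y.1), (x.1 + y.1, x.2 + y.2)%R).

Definition series := int * int -> R[i].

(* Elements of A_theta^alg: finite sums  sum_k c_k U_1^{n_k} U_2^{m_k}
   (represented by a finite list of (coefficient, exponent) pairs). *)
Definition alg := seq (R[i] * (int * int)).

(* Left multiplication of a series by a monomial x:
   x * sum_q phi_q U^q = sum_q phi_q (mono_mul x q); the coefficient
   at p comes from the unique q = p - x. *)
Definition lmul_mono (x : int * int) (phi : series) : series :=
  fun p => let q := (p.1 - x.1, p.2 - x.2)%R in (mono_mul x q).1 * phi q.

(* Right multiplication of a series by a monomial x:
   (sum_q phi_q U^q) * x = sum_q phi_q (mono_mul q x). *)
Definition rmul_mono (x : int * int) (phi : series) : series :=
  fun p => let q := (p.1 - x.1, p.2 - x.2)%R in (mono_mul q x).1 * phi q.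

Definition lact (a : alg) (phi : series) : series :=
  fun p => \sum_(t <- a) t.1 * lmul_mono t.2 phi p.
Definition ract (a : alg) (phi : series) : series :=
  fun p => \sum_(t <- a) t.1 * rmul_mono t.2 phi p.

Definition minus1_mono (x : int * int) : R[i] * (int * int) := (1, (- x.1, - x.2)%R).
Definition minus1_alg (a : alg) : alg :=
  [seq ((t.1 * (minus1_mono t.2).1), (minus1_mono t.2).2) | t <- a].

Definition H0_minus1 (phi : series) : Prop :=
  forall a : alg, lact (minus1_alg a) phi = ract a phi.

(* The automorphism rho : U_1 |-> U_2^{-1}, U_2 |-> U_1; on monomials
   rho(U_1^n U_2^m) = U_2^{-n} U_1^m = mono_mul (0,-n) (m,0)
                    = lambda^(-n m) U_1^m U_2^{-n}. *)
Definition rho_mono (x : int * int) : R[i] * (int * int) :=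
  mono_mul (0, - x.1)%R (x.2, 0)%R.

(* Termwise action of rho on series:
   rho . sum_x phi_x U^x = sum_x phi_x rho(U^x); the term landing at
   p = (p1,p2) comes from the unique x = (-p2, p1) (rho_mono x has exponent p). *)
Definition rho_series (phi : series) : series :=
  fun p => let x := (- p.2, p.1)%R in (rho_mono x).1 * phi x.

Definition Z4_invariant (phi : series) : Prop :=
  forall k : 'I_4, iter k rho_series phi = phi.

Definition lincomb3 (c : 'rV[R[i]]_3) (f : 'I_3 -> series) : series :=
  fun p => \sum_(i < 3) c ord0 i * f i p.

End NCTorus.

(* Choose mu with mu^2 = lambda (mu = e^{i pi theta}) and write a series as
   phi_u = psi_u mu^{u_1 u_2}.  In these coordinates the (-1)-twisted trace
   condition tested on a monomial a = U^x reads psi(p + x) = psi(p - x), i.e.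
   psi is 2Z^2-periodic, and rho acts on psi by the rotation (n, m) |-> (-m, n).
   The invariant series are therefore the functions on (Z/2)^2 constant on the
   rotation orbits {00}, {11} and {10, 01}: a three-dimensional space. *)
From HB Require Import structures.
From mathcomp Require Import all_boot all_order all_algebra.
From mathcomp Require Import complex.
From mathcomp Require Import reals trigo.
From mathcomp Require Import ring zify.
Set Implicit Arguments.
Unset Strict Implicit.

Import GRing.Theory Num.Theory.
Local Open Scope ring_scope.

Lemma modz2N (n : int) : (- n %% 2 = n %% 2)%Z.
Proof. by rewrite -(modzMDl n (- n)); congr (_ %% _)%Z; ring. Qed.

Lemma modz2_01 (n : int) : (n %% 2)%Z = 0 \/ (n %% 2)%Z = 1.
Proof.
have := modz_ge0 n (isT : (2 : int) != 0); have := ltz_pmod n (isT : (0 : int) < 2).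
lia.
Qed.

Definition parity_class (u : int * int) : 'I_3 :=
  let a := (u.1 %% 2)%Z in let b := (u.2 %% 2)%Z in
  inord (if a == b then `|a| else 2)%N.

Definition class_rep (i : 'I_3) : int * int :=
  match nat_of_ord i with 0%N => (0, 0) | 1%N => (1, 1) | _ => (1, 0) end.

Lemma parity_class_rep (i : 'I_3) : parity_class (class_rep i) = i.
Proof. by apply/val_inj; case: i => -[|[|[|//]]] ?; rewrite /parity_class /= inordK. Qed.

Lemma parity_class_shift2 (u x : int * int) :
  parity_class (u.1 + x.1 * 2, u.2 + x.2 * 2) = parity_class u.
Proof. by rewrite /parity_class /= !(addrC _ (_ * 2)) !modzMDl. Qed.

Lemma parity_class_rot (u : int * int) : parity_class (- u.2, u.1) = parity_class u.
Proof. by rewrite /parity_class /= modz2N eq_sym; case: eqP => // ->. Qed.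

Lemma parity_invariantP (T : Type) (g : int * int -> T) :
  (forall u x, g (u.1 + x.1 * 2, u.2 + x.2 * 2) = g u) /\
  (forall u, g (- u.2, u.1) = g u) <->
  g =1 g \o class_rep \o parity_class.
Proof.
split=> [[periodic rot] u | E]; last first.
  by split=> u *; rewrite E [RHS]E /= ?parity_class_shift2 ?parity_class_rot.
pose r := ((u.1 %% 2)%Z, (u.2 %% 2)%Z); pose q := ((u.1 %/ 2)%Z, (u.2 %/ 2)%Z).
have -> : u = (r.1 + q.1 * 2, r.2 + q.2 * 2).
  by case: u @r @q => a b; rewrite /= !(addrC (_ %% 2)%Z) -!divz_eq.
rewrite periodic /comp parity_class_shift2 /parity_class /r /=.
case: (modz2_01 u.1) => ->; case: (modz2_01 u.2) => -> //=; rewrite /class_rep inordK //=.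
by rewrite -[RHS]rot oppr0.
Qed.

Section NCTorus.
Variables (R : realType) (theta : R).
Local Open Scope complex_scope.

Definition sqrt_lambda : R[i] := cos (pi * theta) +i* sin (pi * theta).
Local Notation mu := sqrt_lambda.

Lemma sqrt_lambda_sqr : mu ^+ 2 = lambda theta.
Proof.
rewrite /lambda /sqrt_lambda expr2.
have -> : 2 * pi * theta = pi * theta + pi * theta by ring.
by rewrite cosD sinD; apply/eqP; rewrite eq_complex /=; apply/andP; split; apply/eqP; ring.
Qed.

Lemma sqrt_lambda_neq0 : mu != 0.
Proof.
apply/eqP => -[mu_re mu_im]; have := cos2Dsin2 (pi * theta).
by rewrite mu_re mu_im expr0n /= addr0 => /eqP; rewrite eq_sym oner_eq0.
Qed.

Lemma lambda_exprz (n : int) : lambda theta ^ n = mu ^ (2 * n).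
Proof. by rewrite -sqrt_lambda_sqr -exprz_exp. Qed.

Lemma sqrt_lambda_exprzD (a b : int) : mu ^ a * mu ^ b = mu ^ (a + b).
Proof. by rewrite expfzDr // sqrt_lambda_neq0. Qed.

Lemma sqrt_lambda_exprzI (a : int) : GRing.rreg (mu ^ a).
Proof. by apply: mulIf; rewrite expfz_neq0 // sqrt_lambda_neq0. Qed.

Definition untwist (phi : series R) : series R := fun u => phi u * mu ^ (- (u.1 * u.2)).

Lemma untwistK (phi : series R) u : untwist phi u * mu ^ (u.1 * u.2) = phi u.
Proof. by rewrite -mulrA sqrt_lambda_exprzD addNr expr0z mulr1. Qed.

Lemma untwist_inj : injective untwist.
Proof.
move=> phi phi' E; apply: boolp.funext => u.
by rewrite -untwistK E untwistK.
Qed.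

Lemma H0_minus1_monoP (phi : series R) : H0_minus1 theta phi <->
  forall x p, lmul_mono theta (- x.1, - x.2) phi p = rmul_mono theta x phi p.
Proof.
split=> [H x p | H a].
  by have := congr1 (fun g => g p) (H [:: (1, x)]); rewrite /lact /ract /= !big_seq1 !mul1r.
apply: boolp.funext => p; rewrite /lact /ract big_map.
by apply: eq_bigr => t _; rewrite /= mulr1 H.
Qed.

Lemma lmul_rmul_monoP (phi : series R) x p :
  lmul_mono theta (- x.1, - x.2) phi p = rmul_mono theta x phi p <->
  untwist phi (p.1 + x.1, p.2 + x.2) = untwist phi (p.1 - x.1, p.2 - x.2).
Proof.
rewrite /lmul_mono /rmul_mono /mono_mul /= !opprK -!(untwistK phi) !lambda_exprz.
rewrite mulrCA sqrt_lambda_exprzD [RHS]mulrCA sqrt_lambda_exprzD /=.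
have -> : 2 * ((p.2 - x.2) * x.1) + (p.1 - x.1) * (p.2 - x.2)
        = 2 * (- x.2 * (p.1 + x.1)) + (p.1 + x.1) * (p.2 + x.2) by ring.
by split=> [/sqrt_lambda_exprzI | ->].
Qed.

Lemma H0_minus1_periodicP (phi : series R) : H0_minus1 theta phi <->
  forall u x, untwist phi (u.1 + x.1 * 2, u.2 + x.2 * 2) = untwist phi u.
Proof.
rewrite H0_minus1_monoP; split=> [H [a b] x | H x p].
  have /lmul_rmul_monoP := H x (a + x.1, b + x.2); rewrite /= !addrK => <-.
  by congr (untwist phi (_, _)); ring.
apply/lmul_rmul_monoP; rewrite -(H (p.1 - x.1, p.2 - x.2) x) /=.
by congr (untwist phi (_, _)); ring.
Qed.

Lemma untwist_rho (phi : series R) p :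
  untwist (rho_series theta phi) p = untwist phi (- p.2, p.1).
Proof.
rewrite /untwist /rho_series /rho_mono /mono_mul /= lambda_exprz.
rewrite mulrAC mulrC mulrA sqrt_lambda_exprzD; congr (_ * mu ^ _); ring.
Qed.

Lemma rho_series_fixP (phi : series R) : rho_series theta phi = phi <->
  forall p, untwist phi (- p.2, p.1) = untwist phi p.
Proof.
split=> [E p | H]; first by rewrite -untwist_rho E.
by apply: untwist_inj; apply: boolp.funext => p; rewrite untwist_rho H.
Qed.

Lemma Z4_invariantP (phi : series R) :
  Z4_invariant theta phi <-> rho_series theta phi = phi.
Proof.
split=> [H | E k]; first by have := H (inord 1); rewrite inordK.
by elim: (val k) => //= n ->.
Qed.

Definition parity_basis (i : 'I_3) : series R :=
  fun u => (parity_class u == i)%:R * mu ^ (u.1 * u.2).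

Lemma untwist_lincomb3 c u :
  untwist (lincomb3 c parity_basis) u = c ord0 (parity_class u).
Proof.
rewrite /untwist /lincomb3 (bigD1 (parity_class u)) //= big1 => [|i /negPf ne_i].
  by rewrite addr0 /parity_basis eqxx mul1r -mulrA sqrt_lambda_exprzD addrN expr0z mulr1.
by rewrite /parity_basis eq_sym ne_i mul0r mulr0.
Qed.

End NCTorus.

Theorem mainTheorem7 (R : realType) (theta : R)
  (theta_irr : ~ exists q : rat, theta = ratr q) :
  exists f : 'I_3 -> series R,
    forall phi : series R,
      (H0_minus1 theta phi /\ Z4_invariant theta phi) <->
      exists! c : 'rV[R[i]]_3, phi = lincomb3 c f.
Proof.
exists (parity_basis theta) => phi.
rewrite Z4_invariantP H0_minus1_periodicP rho_series_fixP parity_invariantP.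
split=> [E | [c [-> _]] u]; last by rewrite /= !untwist_lincomb3 parity_class_rep.
exists (\row_i untwist theta phi (class_rep i)); split.
  apply: (@untwist_inj R theta); apply: boolp.funext => u.
  by rewrite untwist_lincomb3 mxE E.
by move=> c ->; apply/rowP => i; rewrite mxE untwist_lincomb3 parity_class_rep.
Qed.
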